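(* Let $K$ be a field, $G(V,E)$ a finite simple graph, and $\mathfrak{g}$ the $2$-step nilpotent graph Lie algebra associated to $G(V,E)$. Then $$\chi(\mathfrak{g})=\dim\mathfrak{g}-2\nu(G(V,E))=|V|+|E|-2\nu(G(V,E)).$$
   Context: Graph Lie algebra: let $U$ be the $K$-vector space with basis $V$, and $W\subseteq\Lambda^2(U)$ the subspace spanned by $\{v_1\wedge v_2\mid \{v_1,v_2\}\in E\}$. The Lie algebra $\mathfrak{g}$ has underlying space $U\oplus W$ (so $\dim\mathfrak{g}=|V|+|E|$), with $W$ central, and for $v_1,v_2\in V$: $[v_1,v_2]=v_1\wedge v_2$ if $\{v_1,v_2\}\in E$ and $[v_1,v_2]=0$ otherwise. A matching of $G(V,E)$ is a set $S\subseteq E$ of edges such that each vertex lies in at most one edge of $S$; the matching number $\nu(G(V,E))$ is the maximum number of edges in a matching. For a finite-dimensional Lie algebra $\mathfrak{h}$ and $\ell\in\mathfrak{h}^*$, $\mathfrak{h}(\ell)=\{y\in\mathfrak{h}\mid\ell([x,y])=0\ \forall x\in\mathfrak{h}\}$ and the index is $\chi(\mathfrak{h})=\min_{\ell\in\mathfrak{h}^*}\dim\mathfrak{h}(\ell)$. *)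

From HB Require Import structures.
From mathcomp Require Import all_boot all_order all_algebra.
Set Implicit Arguments. Unset Strict Implicit. Unset Printing Implicit Defensive.
Import GRing.Theory.
Local Open Scope ring_scope.

(* Each edge {u,v} is
   represented exactly once, as the ordered pair (u,v) with u before v in the
   enumeration order of T; this fixes the orientation of the basis vector
   u /\ v of W (the other orientation is v /\ u = - u /\ v). *)
Definition edge_pred (T : finType) (e : rel T) : pred (T * T) :=
  fun p => e p.1 p.2 && (enum_rank p.1 < enum_rank p.2)%N.

Notation Edge T e := {p : T * T | @edge_pred T e p}.

(* The graph Lie algebra g = U (+) W, with U = K^V (basis V) and W = K^E
   (basis { u /\ v | {u,v} in E }), as a K-vector space (vectType). *)
Notation graphLie K T e :=
  ({ffun T -> K^o} * {ffun Edge T e -> K^o})%type.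

(* Lie bracket: W is central, and for x = (a, w), y = (b, w'),
   [x, y] = sum_{u<v, {u,v} in E} (a_u b_v - a_v b_u) (u /\ v),
   the bilinear extension of [v1,v2] = v1 /\ v2 on edges, 0 on non-edges. *)
Definition glie_bracket (K : fieldType) (T : finType) (e : rel T)
  (x y : graphLie K T e) : graphLie K T e :=
  (0, [ffun p : Edge T e =>
         x.1 (val p).1 * y.1 (val p).2 - x.1 (val p).2 * y.1 (val p).1]).

(* g(l) = { y | l([x,y]) = 0 for all x }, i.e. the kernel of the linear map
   y |-> (x |-> l([x,y])) from g to its dual g^* = 'Hom(g, K). *)
Definition stabilizer (K : fieldType) (T : finType) (e : rel T)
  (l : 'Hom(graphLie K T e, K^o)) : {vspace graphLie K T e} :=
  lker (linfun (fun y : graphLie K T e =>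
          (linfun (fun x : graphLie K T e => l (glie_bracket x y))
            : 'Hom(graphLie K T e, K^o)))).

Definition is_matching (T : finType) (e : rel T) (S : {set Edge T e}) : bool :=
  [forall v : T, #|[set p in S | ((val p).1 == v) || ((val p).2 == v)]| <= 1]%N.

Definition matching_number (T : finType) (e : rel T) : nat :=
  \max_(S : {set Edge T e} | is_matching S) #|S|.

From HB Require Import structures.
From mathcomp Require Import all_boot all_order all_fingroup all_algebra.
From mathcomp Require Import ring zify.
Set Implicit Arguments. Unset Strict Implicit. Unset Printing Implicit Defensive.
Import GRing.Theory.
Local Open Scope ring_scope.

(* Since [W] is central and the bracket lands in [W], [l([x, y])] only depends
   on the vertex parts of [x] and [y], through an alternating form [B_l] on [U];
   hence [dim g(l) = dim g - rank B_l].  The entry of [B_l] at [(u, v)] vanishes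
   unless [{u, v}] is an edge.  A principal minor of [B_l] of size [rank B_l] is
   nonsingular, and in the Leibniz expansion of an alternating determinant the
   terms with an odd cycle cancel in pairs; so some permutation whose cycles are
   all even has nonzero entries [B_l(i, s i)], and one class of a 2-colouring of
   its cycles gives a matching with [rank B_l / 2] edges.  Conversely, summing
   the edge coordinates over a maximum matching gives an [l] with
   [rank B_l = 2 nu]. *)

Lemma sum_involution_eq0 (R : zmodType) (I : finType) (S : {set I}) (g : I -> I)
    (f : I -> R) :
  (forall x, x \in S -> [/\ g x \in S, g (g x) = x, g x != x & f (g x) = - f x]) ->
  \sum_(x in S) f x = 0.
Proof.
move: {2}#|S| (leqnn #|S|) => n; elim: n S => [|n IH] S leSn gS.
  by move: leSn; rewrite leqn0 => /eqP/cards0_eq ->; rewrite big_set0.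
have [->|[x xS]] := set_0Vmem S; first by rewrite big_set0.
have [gxS ggx gxx fgx] := gS x xS.
rewrite (big_setD1 x) // (big_setD1 (g x)) /=; last by rewrite !inE gxx.
rewrite IH ?fgx ?addr0 ?subrr //.
  move: leSn; rewrite (cardsD1 x S) xS (cardsD1 (g x) (S :\ x)) !inE gxx gxS.
  by rewrite !add1n ltnS => /ltnW.
move=> y; rewrite !inE => /and3P[ygx yx yS].
have [gyS ggy gyy fgy] := gS y yS.
split=> //; rewrite gyS andbT; apply/andP; split.
  by apply: contraNneq yx => gyx; rewrite -ggy gyx ggx.
by apply: contraNneq ygx => gygx; rewrite -ggy gygx.
Qed.

Section OddCycleFlip.
Variable X : finType.
Implicit Types (s t : {perm X}) (x y z : X).
Local Open Scope group_scope.

Lemma porbitS s x : porbit s (s x) = porbit s x.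
Proof. by have := porbit_perm s 1 x; rewrite expg1. Qed.

Lemma mem_porbitS s x y : (s y \in porbit s x) = (y \in porbit s x).
Proof. by rewrite porbit_sym [y \in _]porbit_sym porbitS. Qed.

Lemma mem_porbitV s x y : (s^-1 y \in porbit s x) = (y \in porbit s x).
Proof. by rewrite -{2}[y](permKV s) mem_porbitS. Qed.

Lemma porbit_eq_on s t y :
  {in porbit s y, t =1 s} -> porbit t y = porbit s y.
Proof.
move=> eq_ts.
have tsE i : (t ^+ i) y = (s ^+ i) y.
  elim: i => [|i IH]; first by rewrite !expg0.
  by rewrite !expgSr !permM IH eq_ts // mem_porbit.
by apply/setP => z; apply/porbitP/porbitP => -[i ->]; exists i; rewrite tsE.
Qed.

Definition inv_on_porbit s x0 x := if x \in porbit s x0 then s^-1 x else x.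

Lemma inv_on_porbit_inj s x0 : injective (inv_on_porbit s x0).
Proof.
move=> x y; rewrite /inv_on_porbit.
case xC: (x \in porbit s x0); case yC: (y \in porbit s x0) => //.
- exact: perm_inj.
- by move=> xy; move: yC; rewrite -xy mem_porbitV xC.
- by move=> xy; move: xC; rewrite xy mem_porbitV yC.
Qed.

Definition odd_porbit_pt s := [pick x | odd #|porbit s x|].

(* [r ^+ 2 * s] with [r] the inverse of [s] on the chosen odd cycle reverses
   that cycle; being a square times [s], it has the parity of [s]. *)
Definition flip_odd_cycle s : {perm X} :=
  if odd_porbit_pt s is Some x0 then perm (@inv_on_porbit_inj s x0) ^+ 2 * s
  else s.

Section Flip.
Variables (s : {perm X}) (x0 : X).
Hypothesis s_x0 : odd_porbit_pt s = Some x0.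

Lemma odd_porbit_pt_odd : odd #|porbit s x0|.
Proof. by move: s_x0; rewrite /odd_porbit_pt; case: pickP => // y oddy [<-]. Qed.

Lemma flip_odd_cycleE x :
  flip_odd_cycle s x = if x \in porbit s x0 then s^-1 x else s x.
Proof.
rewrite /flip_odd_cycle s_x0 permM expgS expg1 !permM.
rewrite !(@permE _ (inv_on_porbit s x0)) /inv_on_porbit.
by case xC: (x \in porbit s x0); rewrite ?mem_porbitV xC ?permKV.
Qed.

Lemma flip_odd_cycle_neq : (forall x, s x != x) -> flip_odd_cycle s != s.
Proof.
move=> fpf; apply/eqP => flip_s.
have x0C := porbit_id s x0.
have ssx0 : s (s x0) = x0.
  by rewrite -[in RHS](permKV s x0) -{2}flip_s flip_odd_cycleE x0C.
have Cx0 : porbit s x0 = [set x0; s x0].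
  apply/eqP; rewrite eqEsubset; apply/andP; split; apply/subsetP => y.
    case/porbitP=> i ->; elim: i => [|i IH]; first by rewrite expg0 perm1 set21.
    by rewrite expgSr permM; move: IH; rewrite !inE => /orP[]/eqP->;
      rewrite ?ssx0 eqxx ?orbT.
  by rewrite !inE => /orP[]/eqP->; rewrite ?mem_porbitS x0C.
by have := odd_porbit_pt_odd; rewrite Cx0 cards2 eq_sym (fpf x0).
Qed.

End Flip.

Lemma porbit_flip_odd_cycle s x : porbit (flip_odd_cycle s) x = porbit s x.
Proof.
case s_x0: (odd_porbit_pt s) => [x0|]; last by rewrite /flip_odd_cycle s_x0.
have [xC|xC] := boolP (x \in porbit s x0).
  have Cx : porbit s x = porbit s x0 by apply/eqP; rewrite eq_porbit_mem.
  rewrite -(porbitV s x); apply: porbit_eq_on => z.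
  by rewrite porbitV Cx => zC; rewrite (flip_odd_cycleE s_x0) zC.
apply: porbit_eq_on => z zx; rewrite (flip_odd_cycleE s_x0).
case: ifP => // zC; case/negP: xC.
have Cxz : porbit s x = porbit s z by apply/eqP; rewrite eq_porbit_mem porbit_sym.
by rewrite -eq_porbit_mem Cxz eq_porbit_mem.
Qed.

Lemma odd_porbit_pt_flip s : odd_porbit_pt (flip_odd_cycle s) = odd_porbit_pt s.
Proof. by apply: eq_pick => x; rewrite /= porbit_flip_odd_cycle. Qed.

Lemma flip_odd_cycleK s : flip_odd_cycle (flip_odd_cycle s) = s.
Proof.
case s_x0: (odd_porbit_pt s) => [x0|]; last by rewrite /flip_odd_cycle s_x0 s_x0.
have fs_x0 : odd_porbit_pt (flip_odd_cycle s) = Some x0.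
  by rewrite odd_porbit_pt_flip.
apply/permP => x; rewrite (flip_odd_cycleE fs_x0) porbit_flip_odd_cycle.
case: ifP => xC; last by rewrite (flip_odd_cycleE s_x0) xC.
apply: (@perm_inj _ (flip_odd_cycle s)).
by rewrite permKV (flip_odd_cycleE s_x0) mem_porbitS xC permK.
Qed.

Lemma odd_perm_flip s : odd_perm (flip_odd_cycle s) = odd_perm s.
Proof.
rewrite /flip_odd_cycle; case: (odd_porbit_pt s) => // x0.
by rewrite odd_permM expgS expg1 odd_permM addbb.
Qed.

Lemma even_porbits_bipartition s : (forall x, ~~ odd #|porbit s x|) ->
  exists P : {set X}, forall x, (s x \in P) = (x \notin P).
Proof.
move=> even_s.
pose r x := odflt x [pick y in porbit s x].
have rx x : r x \in porbit s x.
  by rewrite /r; case: pickP => [y ->|/(_ x)]; rewrite ?porbit_id.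
have rS x : r (s x) = r x.
  by rewrite /r porbitS; case: pickP => // /(_ x); rewrite porbit_id.
pose L x := #|porbit s x|.
pose tr x := traject s (r x) (L x).
have Cr x : porbit s (r x) = porbit s x by apply/eqP; rewrite eq_porbit_mem.
have trE x : porbit s x =i tr x.
  by move=> y; rewrite -Cr porbit_traject /tr /L Cr.
have tr_uniq x : uniq (tr x) by rewrite /tr /L -Cr uniq_traject_porbit.
have size_tr x : size (tr x) = L x by rewrite size_traject.
(* [x] is coloured by the parity of its distance from the root [r x] of its cycle *)
pose d x := index x (tr x).
exists [set x | ~~ odd (d x)] => x; rewrite !inE negbK.
have x_tr : x \in tr x by rewrite -trE porbit_id.
have dx_lt : (d x < L x)%N by rewrite -size_tr index_mem.
have xE : x = iter (d x) s (r x) by rewrite -(nth_traject s dx_lt) nth_index.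
have trS : tr (s x) = tr x by rewrite /tr /L rS porbitS.
rewrite /d trS; have := even_s x; rewrite -/(L x).
case: (ltngtP (d x).+1 (L x)) => [lt _|gt|eq].
- have -> : s x = nth (r x) (tr x) (d x).+1 by rewrite nth_traject //= -xE.
  by rewrite index_uniq ?size_tr //= negbK.
- by move: gt; rewrite ltnNge dx_lt.
- have -> : s x = r x by rewrite {1}xE -iterS eq -{2}(iter_porbit s (r x)) Cr.
  have -> : index (r x) (tr x) = 0%N by rewrite /tr; case: (L x) dx_lt => //= ?; rewrite eqxx.
  by rewrite -eq /= -/(d x); case: (odd (d x)).
Qed.

End OddCycleFlip.
Section AlternatingDet.
Variables (R : comPzRingType) (k : nat) (A : 'M[R]_k).
Hypotheses (A_alt : forall i j, A j i = - A i j) (A_diag : forall i, A i i = 0).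

Let term (s : 'S_k) := (-1) ^+ s * \prod_i A i (s i).

Lemma term_flip_odd_cycle (s : 'S_k) x0 : odd_porbit_pt s = Some x0 ->
  term (flip_odd_cycle s) = - term s.
Proof.
move=> s_x0; set C := porbit s x0.
rewrite /term odd_perm_flip -mulrN; congr (_ * _).
rewrite (bigID (mem C)) [in RHS](bigID (mem C)) /= -mulNr; congr (_ * _); last first.
  by apply: eq_bigr => i iC; rewrite (flip_odd_cycleE s_x0) (negPf iC).
rewrite (eq_bigr (fun i => A i ((s^-1)%g i))); last first.
  by move=> i iC; rewrite (flip_odd_cycleE s_x0) iC.
rewrite (reindex_inj (@perm_inj _ s)) /=.
rewrite (eq_big (mem C) (fun j => - A j (s j))) => [|j|j _]; last first.
- by rewrite permK A_alt.
- by rewrite mem_porbitS.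
by rewrite prodrN -signr_odd (odd_porbit_pt_odd s_x0) expr1 mulN1r.
Qed.

(* Terms with a fixed point vanish on the zero diagonal; the remaining terms
   with an odd cycle cancel in pairs under [flip_odd_cycle]. *)
Lemma det_alternating_neq0 : \det A != 0 ->
  exists2 s : 'S_k, (forall i, A i (s i) != 0) &
    exists P : {set 'I_k}, forall i, (s i \in P) = (i \notin P).
Proof.
move=> detA_neq0.
pose fpf (s : 'S_k) := [forall i, s i != i].
have odd_terms0 : \sum_(s : 'S_k | odd_porbit_pt s != None) term s = 0.
  rewrite (bigID fpf) /= addrC big1 ?add0r => [|s /andP[_ /forallPn[i]]]; last first.
    by rewrite negbK => /eqP si; rewrite /term (bigD1 i) //= si A_diag mul0r mulr0.
  rewrite (eq_bigl [in [set s : 'S_k | (odd_porbit_pt s != None) && fpf s]]);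
    last by move=> s; rewrite inE.
  apply: (sum_involution_eq0 (g := @flip_odd_cycle _)) => s.
  rewrite !inE => /andP[]; case s_x0: (odd_porbit_pt s) => [x0|//] _ fpf_s.
  split; [|exact: flip_odd_cycleK| |exact: term_flip_odd_cycle s_x0].
  - rewrite odd_porbit_pt_flip s_x0 /=; apply/forallP => i.
    rewrite (flip_odd_cycleE s_x0); case: ifP => _; last exact: (forallP fpf_s).
    by apply: contra (forallP fpf_s i) => /eqP{1}<-; rewrite permKV.
  - by apply: (flip_odd_cycle_neq s_x0) => i; apply: (forallP fpf_s).
have /existsP[s /andP[/eqP s_even term_s]] :
    [exists s, (odd_porbit_pt s == None) && (term s != 0)].
  move: detA_neq0; apply: contraNT; rewrite negb_exists => /forallP term0.
  rewrite /determinant -/term (bigID (fun s => odd_porbit_pt s != None)) /=.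
  rewrite odd_terms0 add0r big1 // => s; rewrite negbK => s_even.
  by move: (term0 s); rewrite s_even negbK => /eqP.
exists s => [i|].
  by apply: contra term_s => /eqP Ai0; rewrite /term (bigD1 i) //= Ai0 mul0r mulr0.
apply: even_porbits_bipartition => x.
by move: s_even; rewrite /odd_porbit_pt; case: pickP => // /(_ x) ->.
Qed.

End AlternatingDet.

Lemma lfunE_linear (K : fieldType) (U W : vectType K) (f : U -> W) :
  linear f -> linfun f =1 f.
Proof.
move=> f_lin.
exact: (lfunE (HB.pack f (GRing.isLinear.Build _ _ _ _ f f_lin) : {linear U -> W})).
Qed.

Section BracketForm.
Variables (K : fieldType) (T : finType) (e : rel T).
Local Notation g := (graphLie K T e).
Local Notation E := (Edge T e).
Local Notation V := {ffun T -> K^o}.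

Definition fdelta (I : finType) (i : I) : {ffun I -> K^o} := [ffun j => (j == i)%:R].

Lemma ffun_sum_fdelta (I : finType) (w : {ffun I -> K^o}) :
  w = \sum_i w i *: fdelta i.
Proof.
apply/ffunP => j; rewrite sum_ffunE (bigD1 j) //= big1 => [|i ij].
  by rewrite !ffunE eqxx addr0 [_ *: _]mulr1.
by rewrite !ffunE eq_sym (negPf ij) [_ *: _]mulr0.
Qed.

Definition edge_coef (l : 'Hom(g, K^o)) (p : E) : K := l (0, fdelta p).

Definition bracket_form (l : 'Hom(g, K^o)) (a b : V) : K :=
  \sum_p edge_coef l p * (a (val p).1 * b (val p).2 - a (val p).2 * b (val p).1).

Variable l : 'Hom(g, K^o).
Local Notation B := (bracket_form l).

Lemma hom_central (w : {ffun E -> K^o}) : l (0, w) = \sum_p w p * edge_coef l p.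
Proof.
have -> : ((0 : V), w) = \sum_p w p *: ((0 : V), fdelta p).
  rewrite {1}(ffun_sum_fdelta w).
  elim/big_rec2: _ => [//|p a b _ <-].
  by apply/eqP; rewrite xpair_eqE /= scaler0 add0r !eqxx.
by rewrite raddf_sum; apply: eq_bigr => p _; exact: linearZ.
Qed.

Lemma hom_bracket x y : l (glie_bracket x y) = B x.1 y.1.
Proof.
by rewrite hom_central; apply: eq_bigr => p _; rewrite ffunE mulrC.
Qed.

Lemma bracket_formC a b : B a b = - B b a.
Proof. by rewrite /bracket_form -sumrN; apply: eq_bigr => p _; ring. Qed.

Lemma bracket_formxx a : B a a = 0.
Proof. by rewrite /bracket_form big1 // => p _; ring. Qed.

Lemma bracket_form_linearl b : linear (fun a : V => B a b : K^o).
Proof.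
move=> c a1 a2; rewrite /bracket_form scaler_sumr -big_split /=.
by apply: eq_bigr => p _; rewrite !ffunE /GRing.scale /=; ring.
Qed.

Lemma bracket_form_linearr a : linear (fun b : V => B a b : K^o).
Proof.
move=> c b1 b2; rewrite /bracket_form scaler_sumr -big_split /=.
by apply: eq_bigr => p _; rewrite !ffunE /GRing.scale /=; ring.
Qed.

Definition bracket_map : 'Hom(V, 'Hom(V, K^o)) :=
  linfun (fun b : V => linfun (fun a : V => B a b : K^o) : 'Hom(V, K^o)).

Lemma bracket_mapE b a : bracket_map b a = B a b.
Proof.
rewrite !lfunE_linear //; first exact: bracket_form_linearl.
move=> c b1 b2; apply/lfunP => x.
rewrite add_lfunE scale_lfunE !lfunE_linear; try exact: bracket_form_linearl.
exact: bracket_form_linearr.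
Qed.

Lemma dim_ffun (I : finType) : dim {ffun I -> K^o} = #|I|.
Proof. exact: muln1. Qed.

Lemma dim_graphLie : \dim {: g} = (#|T| + #|{: E}|)%N.
Proof. by rewrite dimvf /dim /= !dim_ffun. Qed.

Definition vertex_proj : 'Hom(g, V) := linfun (fun y : g => y.1).

Lemma vertex_projE y : vertex_proj y = y.1.
Proof. by rewrite lfunE_linear. Qed.

Lemma stabilizer_lker : stabilizer l = lker (bracket_map \o vertex_proj)%VF.
Proof.
have inner_lin y : linear (fun x : g => l (glie_bracket x y) : K^o).
  by move=> c x1 x2; rewrite !hom_bracket; apply: bracket_form_linearl.
have outer_lin : linear (fun y : g => linfun (fun x : g => l (glie_bracket x y) : K^o)
                                      : 'Hom(g, K^o)).
  move=> c y1 y2; apply/lfunP => x; rewrite add_lfunE scale_lfunE !lfunE_linear //.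
  by rewrite !hom_bracket; apply: bracket_form_linearr.
apply/vspaceP => y; rewrite !memv_ker comp_lfunE /stabilizer.
rewrite (lfunE_linear outer_lin) vertex_projE.
apply/eqP/eqP => y0; apply/lfunP => x; rewrite zero_lfunE.
  have := congr1 (fun f : 'Hom(g, K^o) => f (x, 0)) y0.
  by rewrite /= zero_lfunE lfunE_linear // hom_bracket bracket_mapE.
by rewrite lfunE_linear // hom_bracket -bracket_mapE y0 zero_lfunE.
Qed.

Lemma dim_stabilizer :
  \dim (stabilizer l) = (\dim {: g} - \dim (limg bracket_map))%N.
Proof.
have := limg_ker_dim (bracket_map \o vertex_proj)%VF fullv.
rewrite capfv -stabilizer_lker limg_comp => <-.
suff -> : limg vertex_proj = fullv by rewrite addnK.
apply/eqP; rewrite eqEsubv subvf; apply/subvP => a _.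
by rewrite -[a]/((a, 0 : {ffun E -> K^o}).1) -vertex_projE memv_img ?memvf.
Qed.

End BracketForm.

Lemma map_enum_val (T : finType) (A : {pred T}) :
  map (@enum_val T A) (enum 'I_#|A|) = enum A.
Proof.
case: (pickP A) => [x0 _|A0]; last first.
  by rewrite (eq_enum A0) enum0; apply/nilP; rewrite /nilp size_map size_enum_ord (eq_card0 A0).
apply: (@eq_from_nth _ x0) => [|i]; rewrite size_map size_enum_ord ?cardE // => ilt.
rewrite (nth_map (Ordinal ilt)) ?size_enum_ord //.
have -> : nth (Ordinal ilt) (enum 'I_#|A|) i = Ordinal ilt.
  by apply: val_inj; rewrite /= nth_enum_ord.
by rewrite (enum_val_nth x0).
Qed.

Lemma free_spanning_subfamily (K : fieldType) (vT : vectType K) (I : finType)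
    (Phi : I -> vT) :
  exists k (f : 'I_k -> I), [/\ injective f, free [tuple Phi (f i) | i < k]
    & forall s, Phi s \in <<[tuple Phi (f i) | i < k]>>%VS].
Proof.
pose X (J : {set I}) := [seq Phi s | s <- enum J].
have [|J fJ Jmax] := @arg_maxnP _ set0 (fun J => free (X J)) (fun J : {set I} => #|J|).
  by rewrite /X enum_set0 nil_free.
have XJ : [tuple Phi (enum_val i) | i < #|J|] = X J :> seq vT.
  by rewrite /X -map_enum_val -map_comp.
exists #|J|, enum_val; rewrite XJ; split => [|//|s]; first exact: enum_val_inj.
have [sJ|sJ] := boolP (s \in J); first by apply: memv_span; apply: map_f; rewrite mem_enum.
apply/negPn/negP => s_span.
have: free (X (s |: J)).
  rewrite (@perm_free _ _ _ (Phi s :: X J)) ?free_cons ?s_span ?fJ //.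
  rewrite /X -map_cons; apply: perm_map; apply: uniq_perm; first exact: enum_uniq.
    by rewrite /= mem_enum (negPf sJ) enum_uniq.
  by move=> x; rewrite mem_enum in_setU1 inE mem_enum.
by move/Jmax; rewrite cardsU1 sJ /geq /= ltnn.
Qed.

Section Matchings.
Variables (T : finType) (e : rel T).
Hypotheses (e_sym : symmetric e) (e_irr : irreflexive e).
Local Notation E := (Edge T e).

Definition incident (v : T) (p : E) := ((val p).1 == v) || ((val p).2 == v).

Lemma matching_incident_eq (S : {set E}) v p q : is_matching S ->
  p \in S -> q \in S -> incident v p -> incident v q -> p = q.
Proof.
move=> /forallP/(_ v) S_v pS qS vp vq.
by apply: (card_le1_eqP S_v); rewrite inE ?pS ?qS.
Qed.

Lemma leq_matching_number (S : {set E}) : is_matching S -> (#|S| <= matching_number e)%N.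
Proof. exact: leq_bigmax_cond. Qed.

Lemma matching_number_attained : exists2 S : {set E}, is_matching S & #|S| = matching_number e.
Proof.
have set0_matching : is_matching (set0 : {set E}).
  by apply/forallP => v; rewrite (@eq_card0 _ _ (fun p => _)) // => p; rewrite !inE.
have [S S_matching S_max] := @arg_maxnP _ set0 (@is_matching T e) (fun S => #|S|) set0_matching.
exists S => //; apply/eqP; rewrite eqn_leq leq_matching_number //.
by apply/bigmax_leqP => S' /S_max.
Qed.

Lemma edge_neq (p : E) : (val p).1 != (val p).2.
Proof.
by have /andP[ep _] := valP p; apply: contraTneq ep => ->; rewrite e_irr.
Qed.

Definition edge_of (s t : T) : T * T :=
  if (enum_rank s < enum_rank t)%N then (s, t) else (t, s).

Lemma edge_ofP s t : e s t -> edge_pred e (edge_of s t).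
Proof.
move=> est; rewrite /edge_pred /edge_of.
have rst : enum_rank s != enum_rank t.
  by apply: contraTneq est => /enum_rank_inj ->; rewrite e_irr.
case: ltngtP => [lt|gt|eq] /=; first by rewrite est lt.
  by rewrite e_sym est gt.
by rewrite (val_inj eq) eqxx in rst.
Qed.

(* The edges [{f i, f (s i)}] for [i] in one colour class form a matching
   covering the image of [f]. *)
Lemma matching_number_perm_bound k (f : 'I_k -> T) (s : 'S_k) (P : {set 'I_k}) :
  injective f -> (forall i, (s i \in P) = (i \notin P)) ->
  (forall i, e (f i) (f (s i))) -> (k <= 2 * matching_number e)%N.
Proof.
move=> f_inj sP es.
pose edge i : E := Sub (edge_of (f i) (f (s i))) (edge_ofP (es i)).
have incident_edge i v : incident v (edge i) = (f i == v) || (f (s i) == v).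
  by rewrite /incident /= /edge_of; case: ifP => _ //=; rewrite orbC.
have edge_inj i j v : i \in P -> j \in P ->
    incident v (edge i) -> incident v (edge j) -> i = j.
  rewrite !incident_edge => iP jP /orP[]/eqP <- /orP[]/eqP/f_inj ij.
  - by [].
  - by move: iP; rewrite -ij sP jP.
  - by move: jP; rewrite ij sP iP.
  - by rewrite (perm_inj ij).
pose S := [set edge i | i in P].
have S_matching : is_matching S.
  apply/forallP => v; apply/card_le1_eqP => p q; rewrite !inE.
  by case/andP=> /imsetP[i iP ->] vi /andP[/imsetP[j jP ->] vj]; rewrite (edge_inj i j v).
have card_S : #|S| = #|P|.
  apply: card_in_imset => i j iP jP eij; apply: (edge_inj i j (f i)) => //.
    by rewrite incident_edge eqxx.
  by rewrite -eij incident_edge eqxx.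
have card_P : k = (2 * #|P|)%N.
  have card_CP : #|~: P| = #|P|.
    rewrite -(card_imset P (@perm_inj _ s)); apply: eq_card => j.
    by rewrite inE -[j](permKV s) mem_imset ?sP ?negbK //; exact: perm_inj.
  by rewrite -{1}(card_ord k) -(cardsC P) card_CP mul2n addnn.
by rewrite card_P leq_mul2l -card_S leq_matching_number.
Qed.

End Matchings.

Section RankBound.
Variables (K : fieldType) (T : finType) (e : rel T).
Hypotheses (e_sym : symmetric e) (e_irr : irreflexive e).
Variable l : 'Hom(graphLie K T e, K^o).
Local Notation B := (bracket_form l).
Local Notation Phi s := (bracket_map l (fdelta K s)).

Lemma bracket_form_fdelta_edge s t : B (fdelta K s) (fdelta K t) != 0 -> e s t.
Proof.
apply: contraR => nst; rewrite /bracket_form big1 // => p _.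
have /andP[ep _] := valP p.
have no_st : ((val p).1 == s) && ((val p).2 == t) = false.
  by apply: contraNF nst => /andP[/eqP <- /eqP <-].
have no_ts : ((val p).2 == s) && ((val p).1 == t) = false.
  by apply: contraNF nst => /andP[/eqP <- /eqP <-]; rewrite e_sym.
by rewrite !ffunE -!natrM !mulnb no_st no_ts subrr mulr0.
Qed.

Section PrincipalMinor.
Variables (k : nat) (f : 'I_k -> T).
Local Notation X := [tuple Phi (f i) | i < k].
Hypotheses (X_free : free X) (X_span : forall s, Phi s \in <<X>>%VS).

(* Since the [Phi (f i)] span the image, vanishing of [B z] on the [f i]
   forces [B z = 0]; freeness then kills the coefficients of [z]. *)
Lemma bracket_minor_unitmx :
  \matrix_(i, j) B (fdelta K (f i)) (fdelta K (f j)) \in unitmx.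
Proof.
rewrite -row_free_unit -kermx_eq0; apply/rowV0P => v /sub_kermxP/rowP vA.
pose z := \sum_i v 0 i *: fdelta K (f i).
have Bz_f j : B z (fdelta K (f j)) = 0.
  move: (vA j); rewrite !mxE => <-.
  rewrite -bracket_mapE /z linear_sum; apply: eq_bigr => i _.
  by rewrite linearZ /= bracket_mapE mxE.
have Bz s : B z (fdelta K s) = 0.
  rewrite -bracket_mapE (coord_span (X_span s)) sum_lfunE big1 // => i _.
  by rewrite scale_lfunE nth_mktuple bracket_mapE Bz_f scaler0.
have Phi_z : \sum_i v 0 i *: X`_i = 0.
  have -> : \sum_i v 0 i *: X`_i = bracket_map l z.
    by rewrite linear_sum; apply: eq_bigr => i _; rewrite linearZ nth_mktuple.
  apply/lfunP => a; rewrite zero_lfunE (ffun_sum_fdelta a) linear_sum big1 // => s _.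
  by rewrite linearZ /= bracket_mapE bracket_formC Bz oppr0 scaler0.
by apply/rowP => i; rewrite mxE (freeP X_free _ Phi_z i).
Qed.

End PrincipalMinor.

Lemma rank_bracket_map_le : (\dim (limg (bracket_map l)) <= 2 * matching_number e)%N.
Proof.
have [k [f [f_inj X_free X_span]]] := free_spanning_subfamily (fun s => Phi s).
apply: (@leq_trans k).
  have limg_sub : (limg (bracket_map l) <= <<[tuple Phi (f i) | i < k]>>)%VS.
    apply/subvP => _ /memv_imgP[b _ ->]; rewrite (ffun_sum_fdelta b) linear_sum.
    by apply: memv_suml => s _; rewrite linearZ; apply/memvZ/X_span.
  by rewrite -{1}(size_tuple [tuple Phi (f i) | i < k]) (leq_trans (dimvS limg_sub)) ?dim_span.
set A := \matrix_(i, j) B (fdelta K (f i)) (fdelta K (f j)).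
have A_alt i j : A j i = - A i j by rewrite !mxE bracket_formC.
have A_diag i : A i i = 0 by rewrite mxE bracket_formxx.
have detA : \det A != 0 by rewrite -unitfE -unitmxE bracket_minor_unitmx.
have [s A_s [P sP]] := det_alternating_neq0 A_alt A_diag detA.
apply: (matching_number_perm_bound e_sym e_irr f_inj sP) => i.
by apply: bracket_form_fdelta_edge; move: (A_s i); rewrite mxE.
Qed.

End RankBound.

Section MatchingForm.
Variables (K : fieldType) (T : finType) (e : rel T).
Hypothesis e_irr : irreflexive e.
Local Notation g := (graphLie K T e).
Local Notation E := (Edge T e).
Variable S : {set E}.
Hypothesis S_matching : is_matching S.

Definition matching_form : 'Hom(g, K^o) := linfun (fun x : g => \sum_(p in S) x.2 p : K^o).

Local Notation B := (bracket_form matching_form).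

Lemma edge_coef_matching_form p : edge_coef matching_form p = (p \in S)%:R.
Proof.
rewrite /edge_coef lfunE_linear => [|c x y]; last first.
  by rewrite scaler_sumr -big_split; apply: eq_bigr => q _; rewrite !ffunE.
have [pS|pS] := boolP (p \in S); last first.
  by rewrite big1 // => q qS; rewrite ffunE; case: eqP => // qp; rewrite -qp qS in pS.
rewrite (big_setD1 p) //= big1 => [|q]; first by rewrite !ffunE eqxx addr0.
by rewrite !inE ffunE => /andP[/negPf ->].
Qed.

Lemma bracket_matching_formE a b :
  B a b = \sum_(p in S) (a (val p).1 * b (val p).2 - a (val p).2 * b (val p).1).
Proof.
rewrite /bracket_form (bigID (mem S)) /= [X in _ + X]big1 ?addr0 => [|p pS]; last first.
  by rewrite edge_coef_matching_form (negPf pS) mul0r.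
by apply: eq_bigr => p pS; rewrite edge_coef_matching_form pS mul1r.
Qed.

Lemma bracket_matching_form_fdelta v p b : p \in S -> incident v p ->
  B (fdelta K v) b = ((val p).1 == v)%:R * b (val p).2 - ((val p).2 == v)%:R * b (val p).1.
Proof.
move=> pS vp; rewrite bracket_matching_formE (big_setD1 p) //= big1 ?addr0.
  by rewrite !ffunE.
move=> q; rewrite !inE => /andP[qp qS].
have /norP[/negPf q1 /negPf q2] : ~~ incident v q.
  by apply: contra qp => vq; rewrite (matching_incident_eq S_matching qS pS vq vp).
by rewrite !ffunE q1 q2 !mul0r subrr.
Qed.

Definition matched := [set v | [exists p in S, incident v p]].

Lemma card_matched : #|matched| = (2 * #|S|)%N.
Proof.
pose ends (i : bool) (p : E) := if i then (val p).1 else (val p).2.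
have ends_inj i : {in S &, injective (ends i)}.
  move=> p q pS qS pq; apply: (matching_incident_eq (v := ends i p) S_matching pS qS).
    by rewrite /incident /ends; case: (i); rewrite eqxx ?orbT.
  by rewrite pq /incident /ends; case: (i); rewrite eqxx ?orbT.
have -> : matched = ends true @: S :|: ends false @: S.
  apply/setP => v; rewrite !inE; apply/existsP/orP => [[p /andP[pS]]|].
    by case/orP=> /eqP <-; [left|right]; apply: imset_f.
  by case=> /imsetP[p pS ->]; exists p; rewrite pS /incident eqxx ?orbT.
have disj : ends true @: S :&: ends false @: S = set0.
  apply/setP => v; rewrite !inE; apply/negP => /andP[/imsetP[p pS ->] /imsetP[q qS]].
  rewrite /ends => p1q2; have pq : p = q.
    by apply: (matching_incident_eq (v := (val p).1) S_matching pS qS);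
      rewrite /incident ?p1q2 eqxx ?orbT.
  by move: (edge_neq e_irr p); rewrite {2}pq -p1q2 eqxx.
by rewrite cardsU disj cards0 subn0 !card_in_imset // mul2n addnn.
Qed.

Lemma lker_bracket_matching_form y :
  y \in lker (bracket_map matching_form) -> {in matched, forall v, y v = 0}.
Proof.
rewrite memv_ker => /eqP y0 v; rewrite inE => /existsP[p /andP[pS vp]].
have B0 x : B x y = 0 by rewrite -bracket_mapE y0 zero_lfunE.
have p12 := negPf (edge_neq e_irr p); have p21 : ((val p).2 == (val p).1) = false.
  by rewrite eq_sym.
have := B0 (fdelta K (val p).1); have := B0 (fdelta K (val p).2).
rewrite !(bracket_matching_form_fdelta _ pS) /incident ?eqxx ?orbT // p12 p21.
rewrite !mul0r !mul1r sub0r oppr0 addr0 => /eqP; rewrite oppr_eq0 => /eqP y1 y2.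
by case/orP: vp => /eqP <-.
Qed.

Lemma rank_bracket_matching_form :
  (2 * #|S| <= \dim (limg (bracket_map matching_form)))%N.
Proof.
have ker_sub : (lker (bracket_map matching_form) <=
                <<[seq fdelta K v | v <- enum (~: matched)]>>)%VS.
  apply/subvP => y /lker_bracket_matching_form y0.
  rewrite (ffun_sum_fdelta y) (bigID (mem matched)) /= big1 ?add0r => [|v /y0 ->]; last first.
    exact: scale0r.
  apply: memv_suml => v vM; apply/memvZ/memv_span/map_f.
  by rewrite mem_enum inE.
have := leq_trans (dimvS ker_sub) (dim_span _); rewrite size_map -cardE.
have := limg_ker_dim (bracket_map matching_form) fullv.
rewrite capfv dimvf dim_ffun -card_matched.
have := cardsC matched; lia.
Qed.

End MatchingForm.

Theorem proposition4p4 (K : fieldType) (T : finType) (e : rel T)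
  (e_sym : symmetric e) (e_irr : irreflexive e) :
  let chi := (\dim {: graphLie K T e} - 2 * matching_number e)%N in
  [/\ chi = (#|T| + #|{: Edge T e}| - 2 * matching_number e)%N,
      exists l : 'Hom(graphLie K T e, K^o), \dim (stabilizer l) = chi
    & forall l : 'Hom(graphLie K T e, K^o), (chi <= \dim (stabilizer l))%N].
Proof.
move=> chi; split; first by rewrite /chi dim_graphLie.
  have [S S_matching card_S] := matching_number_attained e.
  exists (matching_form K S); rewrite dim_stabilizer /chi; congr (_ - _)%N.
  apply/eqP; rewrite eqn_leq rank_bracket_map_le //= -card_S.
  exact: rank_bracket_matching_form.
by move=> l; rewrite /chi dim_stabilizer leq_sub2l // rank_bracket_map_le.
Qed.
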